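(* Let $N\ge1$ be an integer, $0<\delta,f\le1$, and let $\Omega$ be a positive-definite verification operator for $|\Psi\rangle$ with second largest eigenvalue $\beta$ and smallest eigenvalue $\tau$, $0<\tau\le\beta<1$. Let $h=[\min\{\beta\ln\beta^{-1},\tau\ln\tau^{-1}\}]^{-1}$. Then $$F(N,\delta,\Omega)\ge\frac{N+1-(\ln\beta)^{-1}\ln(\tau\delta)}{N+1-(\ln\beta)^{-1}\ln(\tau\delta)-h\ln(\tau\delta)},\qquad \mathcal F(N,f,\Omega)\ge\frac{N+1-(\ln\beta)^{-1}\ln f}{N+1-(\ln\beta)^{-1}\ln f-h\ln f}.$$
   Context: Let $\mathcal H$ be a Hilbert space of finite dimension $D\ge2$ and $|\Psi\rangle\in\mathcal H$ a unit vector. A verification operator for $|\Psi\rangle$ is a Hermitian operator $\Omega$ on $\mathcal H$ with $0\le\Omega\le1$, $\Omega|\Psi\rangle=|\Psi\rangle$, whose eigenvalue $1$ is nondegenerate. For a density operator $\rho$ on $\mathcal H^{\otimes(N+1)}$ put $p_\rho=\mathrm{tr}[(\Omega^{\otimes N}\otimes1)\rho]$, $f_\rho=\mathrm{tr}[(\Omega^{\otimes N}\otimes|\Psi\rangle\langle\Psi|)\rho]$. With minimization over permutation-invariant density operators on $\mathcal H^{\otimes(N+1)}$: $F(N,\delta,\Omega)=\min\{f_\rho/p_\rho:p_\rho\ge\delta\}$ and $\mathcal F(N,f,\Omega)=\min\{f_\rho/p_\rho:f_\rho\ge f\}$. *)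

From HB Require Import structures.
From mathcomp Require Import all_boot all_order all_algebra fingroup perm.
From mathcomp Require Import boolp classical_sets reals exp.
From mathcomp.real_closed Require Import complex.
Set Implicit Arguments. Unset Strict Implicit. Unset Printing Implicit Defensive.
Import Order.TTheory GRing.Theory Num.Theory.
Local Open Scope ring_scope.
Local Open Scope classical_set_scope.

Section Defs.
Variable R : realType.
Local Notation C := (R[i]).

Definition hadj m n (A : 'M[C]_(m, n)) : 'M[C]_(n, m) := map_mx Num.conj A^T.

Definition hermitian n (A : 'M[C]_n) : Prop := hadj A = A.

Definition psd n (A : 'M[C]_n) : Prop :=
  hermitian A /\ forall v : 'cV[C]_n, 0 <= (hadj v *m A *m v) 0 0.

Definition posdef n (A : 'M[C]_n) : Prop :=
  hermitian A /\ forall v : 'cV[C]_n, v != 0 -> 0 < (hadj v *m A *m v) 0 0.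

Definition unit_vector n (psi : 'cV[C]_n) : Prop := (hadj psi *m psi) 0 0 = 1.

Definition verification_op n (psi : 'cV[C]_n) (Om : 'M[C]_n) : Prop :=
  [/\ hermitian Om, psd Om, psd (1%:M - Om), Om *m psi = psi
    & \rank (eigenspace Om 1) = 1%N].

(* H^{(x)(N+1)}: product basis indexed by functions 'I_(N+1) -> 'I_D;
   operators on it are kernels idx -> idx -> C (matrix entries). *)
Definition idx (N D : nat) := {ffun 'I_N.+1 -> 'I_D}.
Definition mop (N D : nat) := idx N D -> idx N D -> C.

Definition tens_op N D (A : 'I_N.+1 -> 'M[C]_D) : mop N D :=
  fun i j => \prod_(k < N.+1) A k (i k) (j k).

Definition OmN_id N D (Om : 'M[C]_D) : mop N D :=
  tens_op (fun k : 'I_N.+1 => if (k < N)%N then Om else 1%:M).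

Definition OmN_psi N D (Om : 'M[C]_D) (psi : 'cV[C]_D) : mop N D :=
  tens_op (fun k : 'I_N.+1 => if (k < N)%N then Om else psi *m hadj psi).

Definition trace_mul N D (A rho : mop N D) : C :=
  \sum_(i : idx N D) \sum_(j : idx N D) A i j * rho j i.

Definition density_op N D (rho : mop N D) : Prop :=
  [/\ (forall i j, rho j i = (rho i j)^*),
      (forall v : idx N D -> C,
          0 <= \sum_(i : idx N D) \sum_(j : idx N D) (v i)^* * rho i j * v j)
    & \sum_(i : idx N D) rho i i = 1].

(* invariance under all permutations of the N+1 tensor factors:
   P_s rho P_s^dagger = rho for every s in S_(N+1) *)
Definition perm_invariant N D (rho : mop N D) : Prop :=
  forall (s : 'S_N.+1) (i j : idx N D),
    rho [ffun k => i (s k)] [ffun k => j (s k)] = rho i j.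

(* p_rho and f_rho (real numbers; the traces are real) *)
Definition p_of N D (Om : 'M[C]_D) (rho : mop N D) : R :=
  complex.Re (trace_mul (@OmN_id N D Om) rho).
Definition f_of N D (Om : 'M[C]_D) (psi : 'cV[C]_D) (rho : mop N D) : R :=
  complex.Re (trace_mul (@OmN_psi N D Om psi) rho).

Definition Fdelta N D (delta : R) (Om : 'M[C]_D) (psi : 'cV[C]_D) : R :=
  inf [set r : R | exists rho : mop N D,
         [/\ density_op rho, perm_invariant rho, delta <= p_of Om rho
           & r = f_of Om psi rho / p_of Om rho]].

Definition Ffid N D (fmin : R) (Om : 'M[C]_D) (psi : 'cV[C]_D) : R :=
  inf [set r : R | exists rho : mop N D,
         [/\ density_op rho, perm_invariant rho, fmin <= f_of Om psi rho
           & r = f_of Om psi rho / p_of Om rho]].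

End Defs.

From HB Require Import structures.
From mathcomp Require Import all_boot all_order all_algebra fingroup perm.
From mathcomp Require Import boolp classical_sets reals exp.
From mathcomp.real_closed Require Import complex.
From mathcomp Require Import spectral.
From mathcomp.algebra_tactics Require Import ring lra.
Set Implicit Arguments. Unset Strict Implicit. Unset Printing Implicit Defensive.
Import Order.TTheory GRing.Theory Num.Theory.
Local Open Scope ring_scope.

(* Diagonalise Omega = P^* diag(d) P.  As Omega psi = psi and the eigenvalue 1 is simple,
   psi is, up to a phase, the eigenvector e_a0 with d_a0 = 1, and every other eigenvalue
   lies in [tau, beta].  Measuring rho in the product eigenbasis gives a permutation
   invariant probability q on outcomes x in [D]^(N+1), with
     p = E_q[prod_(k<N) d_(x_k)]   and   f = E_q[prod_(k<N) d_(x_k) [x_N = a0]].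
   By exchangeability the unmeasured last position may be averaged over all N + 1
   positions.  Writing lam x = prod_k d_(x_k), m = E_q lam and J = E_q[lam ln lam] <= 0,
     tau p <= m,   f <= m,   f >= m - J / ((N+1) ln beta),   p - f <= - h J / (N+1),
   the last one because d ln(1/d) >= 1/h on [tau, beta] by concavity.  Jensen gives
   J >= m ln m >= m ln c for every c <= m, which yields f/p >= X / (X - h ln c) with
   X = N + 1 - ln c / ln beta.  Finally c = tau delta <= tau p <= m, resp. c = f <= m. *)

Section LnFacts.
Variable R : realType.
Implicit Types y z : R.

Lemma ln_le_subr1 z : 0 < z -> ln z <= z - 1.
Proof. by move=> z0; have := expR_ge1Dx (ln z); rewrite lnK ?posrE //; lra. Qed.

Lemma xlnx_ge_tangent z y : 0 < z -> 0 < y -> z * ln y + z - y <= z * ln z.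
Proof.
move=> z0 y0; have := ler_wpM2l (ltW z0) (ln_le_subr1 (divr_gt0 y0 z0)).
rewrite ln_div ?posrE // mulrBr [z * (_ - 1)]mulrBr mulr1 mulrCA divff ?gt_eqF //.
lra.
Qed.

(* Concavity of z ln z^-1: two tangent lines at mu, weighted by the distances to the
   endpoints, bound the chord from tau to beta. *)
Lemma min_xlnV_le (tau beta mu : R) : 0 < tau -> tau <= mu -> mu <= beta ->
  Order.min (beta * ln beta^-1) (tau * ln tau^-1) <= mu * ln mu^-1.
Proof.
move=> tau0 taumu mubeta; have mu0 := lt_le_trans tau0 taumu.
have beta0 := lt_le_trans mu0 mubeta.
have [betatau|taubeta] := leP beta tau.
  have -> : mu = tau by apply/le_anti; rewrite taumu (le_trans mubeta betatau).
  by rewrite ge_min lexx orbT.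
rewrite !lnV ?posrE //; set u := Order.min _ _.
have [ub ut] : u <= beta * - ln beta /\ u <= tau * - ln tau by rewrite !ge_min !lexx orbT.
have tangent z : 0 < z -> z * - ln z <= z * (- ln mu - 1) + mu.
  by move=> z0; have := xlnx_ge_tangent z0 mu0; lra.
have bm : 0 <= beta - mu by rewrite subr_ge0.
have mt : 0 <= mu - tau by rewrite subr_ge0.
have wt := ler_wpM2l bm (tangent _ tau0); have wut := ler_wpM2l bm ut.
have wb := ler_wpM2l mt (tangent _ beta0); have wub := ler_wpM2l mt ub.
rewrite -(@ler_pM2l _ (beta - tau)) ?subr_gt0 //; lra.
Qed.

End LnFacts.

Lemma ratio_lower_bound (R : realFieldType) (M h l u m J F P : R) :
  0 < M -> 0 < m -> l < 0 -> - l <= h -> u <= 0 -> m * u <= J ->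
  m - M^-1 * l * J <= F -> P - F <= - (M^-1 * h) * J -> 0 <= F -> F <= P ->
  (M - l * u) / (M - l * u - h * u) <= F / P.
Proof.
move=> M0 m0 l0 lh u0 muJ FJ PFJ F0 FP.
have h0 : 0 <= h by apply: le_trans lh; rewrite oppr_ge0 ltW.
have hu : 0 <= h * - u by rewrite mulr_ge0 ?oppr_ge0.
have MF : M * m - l * J <= M * F.
  by have := ler_wpM2l (ltW M0) FJ; rewrite mulrBr !mulrA mulfV ?gt_eqF // !mul1r.
have MPF : M * (P - F) <= - (h * J).
  by have := ler_wpM2l (ltW M0) PFJ; rewrite mulNr mulrN !mulrA mulfV ?gt_eqF // mul1r.
set X := M - l * u.
have den0 : 0 < X - h * u.
  have : 0 <= (h + l) * - u by rewrite mulr_ge0 ?oppr_ge0 // -lerBlDr sub0r.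
  rewrite /X; lra.
have [X0|X0] := leP X 0.
  apply: le_trans (divr_ge0 F0 (le_trans F0 FP)).
  by rewrite pmulr_lle0 ?invr_gt0.
(* Substituting J >= m u gives m X <= M F and M (P - F) <= m (- h u), hence
   X (P - F) <= F (- h u), which is the claim. *)
have mX_le : m * X <= M * F.
  have : 0 <= - l * (J - m * u) by rewrite mulr_ge0 ?subr_ge0 // oppr_ge0 ltW.
  rewrite /X; lra.
have MPF_le : M * (P - F) <= m * (h * - u).
  have : 0 <= h * (J - m * u) by rewrite mulr_ge0 ?subr_ge0.
  lra.
have P0 : 0 < P.
  apply: lt_le_trans FP; rewrite -(pmulr_rgt0 _ M0).
  by apply: lt_le_trans mX_le; rewrite mulr_gt0.
have XPF : 0 <= X * (m * (h * - u) - M * (P - F)).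
  by apply: mulr_ge0; [exact: ltW | rewrite subr_ge0].
have huF : 0 <= h * - u * (M * F - m * X) by apply: mulr_ge0; rewrite ?subr_ge0.
rewrite ler_pdivrMr // mulrAC ler_pdivlMr // -(ler_pM2l M0).
by clearbody X; move: XPF huF; clear; lra.
Qed.

Section Relabel.
Variables (T : finType) (n : nat).

Definition relabel (s : 'S_n) (x : {ffun 'I_n -> T}) : {ffun 'I_n -> T} :=
  [ffun k => x (s k)].

Lemma relabel_inj s : injective (relabel s).
Proof.
move=> x y /ffunP xy; apply/ffunP => k.
by have := xy (s^-1 k)%g; rewrite !ffunE permKV.
Qed.

End Relabel.

Section ClassicalBound.
Variables (R : realType) (N D : nat).
Local Notation I := {ffun 'I_N.+1 -> 'I_D}.
Local Notation M := (N.+1%:R : R).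
Variables (q : I -> R) (d : 'I_D -> R) (a0 : 'I_D) (tau beta : R).
Hypothesis q_ge0 : forall x, 0 <= q x.
Hypothesis q_sum1 : \sum_x q x = 1.
Hypothesis q_relabel : forall s x, q (relabel s x) = q x.
Hypothesis d_a0 : d a0 = 1.
Hypothesis d_other : forall a, a != a0 -> tau <= d a <= beta.
Hypothesis tau_gt0 : 0 < tau.
Hypothesis tau_le_beta : tau <= beta.
Hypothesis beta_lt1 : beta < 1.

Local Notation is_a0 := (fun a => (a == a0)%:R : R).

Definition expect (A : I -> R) := \sum_x q x * A x.

Lemma ler_expect (A B : I -> R) : (forall x, A x <= B x) -> expect A <= expect B.
Proof. by move=> AB; apply: ler_sum => x _; rewrite ler_wpM2l. Qed.

Lemma expect_ge0 (A : I -> R) : (forall x, 0 <= A x) -> 0 <= expect A.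
Proof. by move=> A0; apply: sumr_ge0 => x _; rewrite mulr_ge0. Qed.

Lemma expectB (A B : I -> R) : expect (fun x => A x - B x) = expect A - expect B.
Proof. by rewrite /expect -sumrB; apply: eq_bigr => x _; rewrite mulrBr. Qed.

Lemma expectZ c (A : I -> R) : expect (fun x => c * A x) = c * expect A.
Proof. by rewrite /expect mulr_sumr; apply: eq_bigr => x _; rewrite mulrCA. Qed.

Lemma expectD (A B : I -> R) : expect (fun x => A x + B x) = expect A + expect B.
Proof. by rewrite /expect -big_split; apply: eq_bigr => x _; rewrite mulrDr. Qed.

Lemma expectZr c (A : I -> R) : expect (fun x => A x * c) = expect A * c.
Proof. by rewrite /expect mulr_suml; apply: eq_bigr => x _; rewrite mulrA. Qed.

Lemma expect_cst c : expect (fun=> c) = c.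
Proof. by rewrite /expect -mulr_suml q_sum1 mul1r. Qed.

Definition avg (t : 'I_N.+1 -> R) := M^-1 * \sum_j t j.

Lemma avg_cst c : avg (fun=> c) = c.
Proof.
by rewrite /avg sumr_const card_ord -[c *+ _]mulr_natl mulrA mulVf ?pnatr_eq0 ?mul1r.
Qed.

Lemma ler_avg (t u : 'I_N.+1 -> R) : (forall j, t j <= u j) -> avg t <= avg u.
Proof. by move=> tu; rewrite ler_wpM2l ?invr_ge0 ?ler0n // ler_sum. Qed.

Lemma d_gt0 a : 0 < d a.
Proof.
have [->|/d_other/andP[taud _]] := eqVneq a a0; first by rewrite d_a0.
exact: lt_le_trans tau_gt0 taud.
Qed.

Lemma tau_le_d a : tau <= d a.
Proof.
have [->|/d_other/andP[] //] := eqVneq a a0.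
by rewrite d_a0 (le_trans tau_le_beta (ltW beta_lt1)).
Qed.

Lemma d_le1 a : d a <= 1.
Proof.
have [->|/d_other/andP[_ dbeta]] := eqVneq a a0; first by rewrite d_a0.
exact: le_trans dbeta (ltW beta_lt1).
Qed.

Definition lam (x : I) := \prod_k d (x k).

Definition pass_weight (g : 'I_D -> R) (x : I) :=
  \prod_(k < N.+1) (if (k < N)%N then d (x k) else g (x k)).

Definition pass_avg (g : 'I_D -> R) (x : I) := avg (fun j => lam x / d (x j) * g (x j)).

Definition ppass := expect (pass_weight (fun=> 1)).
Definition fpass := expect (pass_weight is_a0).

Lemma lam_gt0 x : 0 < lam x.
Proof. by apply: prodr_gt0 => k _; exact: d_gt0. Qed.

Lemma lam_le1 x : lam x <= 1.
Proof. by apply: prodr_ile1 => k _; rewrite ltW ?d_gt0 ?d_le1. Qed.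

Lemma lam_relabel s x : lam (relabel s x) = lam x.
Proof.
rewrite /lam [RHS](reindex_inj (@perm_inj _ s)); apply: eq_bigr => k _.
by rewrite ffunE.
Qed.

Lemma ln_lam x : ln (lam x) = \sum_j ln (d (x j)).
Proof.
rewrite /lam; apply: proj2 (big_ind2 (fun p s => 0 < p /\ ln p = s) _ _ _) => //.
- by rewrite ltr01 ln1.
- by move=> p1 s1 p2 s2 [p10 <-] [p20 <-]; rewrite mulr_gt0 // lnM.
- by move=> k _; rewrite d_gt0.
Qed.

Lemma pass_weight_lam g x : pass_weight g x = lam x / d (x ord_max) * g (x ord_max).
Proof.
rewrite /pass_weight /lam !big_ord_recr /= ltnn mulfK ?gt_eqF ?d_gt0 //.
by congr (_ * _); apply: eq_bigr => k _; rewrite ltn_ord.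
Qed.

(* The tested copies and the unmeasured one are exchangeable, so the last factor can be
   averaged over all N + 1 positions. *)
Lemma expect_pass_weight g : expect (pass_weight g) = expect (pass_avg g).
Proof.
pose t j x := lam x / d (x j) * g (x j).
have tE j : expect (t ord_max) = expect (t j).
  rewrite /expect (reindex_inj (@relabel_inj _ _ (tperm j ord_max))); apply: eq_bigr => x _.
  by rewrite /t q_relabel lam_relabel ffunE tpermR.
have -> : expect (pass_avg g) = M^-1 * \sum_j expect (t j).
  rewrite /expect exchange_big mulr_sumr; apply: eq_bigr => x _.
  by rewrite -mulr_sumr mulrCA.
rewrite -(eq_bigr _ (fun j _ => tE j)) sumr_const card_ord -[expect _ *+ _]mulr_natl.
rewrite mulrA mulVf ?pnatr_eq0 // mul1r; apply: eq_bigr => x _; by rewrite pass_weight_lam.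
Qed.

Definition hcoef := (Order.min (beta * ln beta^-1) (tau * ln tau^-1))^-1.

Lemma beta_gt0 : 0 < beta.
Proof. exact: lt_le_trans tau_gt0 tau_le_beta. Qed.

Lemma ln_beta_lt0 : ln beta < 0.
Proof. by rewrite ln_lt0 // beta_gt0 beta_lt1. Qed.

Lemma hcoef_min_gt0 : 0 < Order.min (beta * ln beta^-1) (tau * ln tau^-1).
Proof.
have tau_lt1 := le_lt_trans tau_le_beta beta_lt1.
have beta0 := beta_gt0.
by rewrite lt_min !mulr_gt0 // !lnV ?posrE // !oppr_gt0 !ln_lt0 ?tau_gt0 ?beta0.
Qed.

Lemma hcoef_ge : - (ln beta)^-1 <= hcoef.
Proof.
rewrite -invrN lef_pV2 ?posrE ?oppr_gt0 ?ln_beta_lt0 ?hcoef_min_gt0 //.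
rewrite ge_min lnV ?posrE ?beta_gt0 //; apply/orP; left.
by apply: ler_piMl; [rewrite oppr_ge0 ln_le0 // | ]; exact: ltW.
Qed.

Lemma pass_avg1_le x : pass_avg (fun=> 1) x <= lam x / tau.
Proof.
rewrite -[_ / tau]avg_cst; apply: ler_avg => j.
rewrite mulr1; apply: ler_wpM2l; first exact/ltW/lam_gt0.
by rewrite lef_pV2 ?posrE ?d_gt0 ?tau_le_d.
Qed.

Lemma pass_avg_a0_le x : pass_avg is_a0 x <= lam x.
Proof.
rewrite -[lam x]avg_cst; apply: ler_avg => j.
have [->|_] := eqVneq (x j) a0; last by rewrite mulr0 ltW ?lam_gt0.
by rewrite d_a0 divr1 mulr1.
Qed.

Lemma pass_avg_a0_ge0 x : 0 <= pass_avg is_a0 x.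
Proof.
rewrite -(avg_cst 0); apply: ler_avg => j.
by rewrite mulr_ge0 ?divr_ge0 ?ler0n // ltW ?lam_gt0 ?d_gt0.
Qed.

Lemma pass_avg_a0_le_avg1 x :
  pass_avg is_a0 x <= pass_avg (fun=> 1) x.
Proof.
apply: ler_avg => j; apply: ler_wpM2l; last by case: eqP.
by rewrite divr_ge0 // ltW ?lam_gt0 ?d_gt0.
Qed.

(* At most ln (lam x) / ln beta positions j have x j != a0, as each such factor is <= beta. *)
Lemma pass_avg_a0_ge x :
  lam x * (1 - M^-1 * (ln beta)^-1 * ln (lam x)) <= pass_avg is_a0 x.
Proof.
have -> : lam x * (1 - M^-1 * (ln beta)^-1 * ln (lam x)) =
    avg (fun j => lam x * (1 - (ln beta)^-1 * ln (d (x j)))).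
  rewrite /avg -mulr_sumr sumrB sumr_const card_ord -mulr_sumr -ln_lam.
  by field; rewrite lt_eqF ?ln_beta_lt0 //= addrC natr1 pnatr_eq0.
rewrite /pass_avg; apply: ler_avg => j; have [->|xa0] := eqVneq (x j) a0.
  by rewrite d_a0 ln1 mulr0 subr0 divr1.
rewrite mulr0 pmulr_rle0 ?lam_gt0 // subr_le0 -(mulVf (ltr0_neq0 ln_beta_lt0)).
have /andP[_ dbeta] := d_other xa0.
apply: ler_wnM2l; first by rewrite invr_le0 ltW ?ln_beta_lt0.
by rewrite ler_ln ?posrE ?d_gt0 ?beta_gt0.
Qed.

Lemma invd_le_hcoef a : a != a0 -> (d a)^-1 <= hcoef * - ln (d a).
Proof.
move=> aa0; have /andP[taud dbeta] := d_other aa0.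
have := min_xlnV_le tau_gt0 taud dbeta; rewrite [ln (d a)^-1]lnV ?posrE ?d_gt0 // => min_le.
rewrite -(ler_pM2l (d_gt0 a)) mulfV ?gt_eqF ?d_gt0 // mulrCA /hcoef.
by rewrite ler_pdivlMl ?hcoef_min_gt0 // mulr1.
Qed.

Lemma pass_avg1_sub_a0_le x :
  pass_avg (fun=> 1) x - pass_avg is_a0 x <=
  - (M^-1 * hcoef) * (lam x * ln (lam x)).
Proof.
have -> : - (M^-1 * hcoef) * (lam x * ln (lam x)) =
    avg (fun j => hcoef * (lam x * - ln (d (x j)))).
  by rewrite /avg -mulr_sumr -mulr_sumr sumrN -ln_lam; ring.
rewrite /pass_avg /avg -mulrBr -sumrB; apply: ler_wpM2l; first by rewrite invr_ge0.
apply: ler_sum => j _; rewrite -mulrBr; have [->|xa0] := eqVneq (x j) a0.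
  by rewrite d_a0 ln1 subrr oppr0 !mulr0.
rewrite subr0 mulr1 mulrCA; apply: ler_wpM2l; first exact/ltW/lam_gt0.
exact: invd_le_hcoef.
Qed.

Lemma tau_ppass_le : tau * ppass <= expect lam.
Proof.
rewrite /ppass expect_pass_weight.
apply: le_trans (ler_wpM2l (ltW tau_gt0) (ler_expect pass_avg1_le)) _.
by rewrite expectZr mulrCA mulfV ?gt_eqF // mulr1.
Qed.

Lemma fpass_le : fpass <= expect lam.
Proof. by rewrite /fpass expect_pass_weight; apply: ler_expect pass_avg_a0_le. Qed.

Lemma fpass_ge0 : 0 <= fpass.
Proof. by rewrite /fpass expect_pass_weight; apply: expect_ge0 pass_avg_a0_ge0. Qed.

Lemma fpass_le_ppass : fpass <= ppass.
Proof.
by rewrite /fpass /ppass !expect_pass_weight; apply: ler_expect pass_avg_a0_le_avg1.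
Qed.

Lemma fpass_ge :
  expect lam - M^-1 * (ln beta)^-1 * expect (fun x => lam x * ln (lam x)) <= fpass.
Proof.
rewrite /fpass expect_pass_weight; apply: le_trans (ler_expect pass_avg_a0_ge).
rewrite -expectZ -expectB; apply: ler_expect => x; rewrite mulrBr mulr1 mulrCA.
by rewrite [M^-1 * _ * _]mulrC.
Qed.

Lemma ppass_sub_fpass_le :
  ppass - fpass <= - (M^-1 * hcoef) * expect (fun x => lam x * ln (lam x)).
Proof.
rewrite /ppass /fpass !expect_pass_weight -expectB -expectZ.
exact: ler_expect pass_avg1_sub_a0_le.
Qed.

Lemma expect_lam_gt0 : 0 < expect lam.
Proof.
apply: lt_le_trans (exprn_gt0 N.+1 tau_gt0) _; rewrite -[X in X <= _]expect_cst.
apply: ler_expect => x; have -> : tau ^+ N.+1 = \prod_(k < N.+1) tau.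
  by rewrite prodr_const card_ord.
by apply: ler_prod => k _; rewrite ltW ?tau_le_d.
Qed.

Lemma expect_lam_le1 : expect lam <= 1.
Proof. by rewrite -(expect_cst 1); apply: ler_expect lam_le1. Qed.

Lemma jensen_xlnx :
  expect lam * ln (expect lam) <= expect (fun x => lam x * ln (lam x)).
Proof.
apply: le_trans (ler_expect (fun x => xlnx_ge_tangent (lam_gt0 x) expect_lam_gt0)).
by rewrite expectB expectD expectZr expect_cst addrK.
Qed.

Lemma classical_bound c : 0 < c -> c <= expect lam ->
  (M - (ln beta)^-1 * ln c) / (M - (ln beta)^-1 * ln c - hcoef * ln c) <= fpass / ppass.
Proof.
move=> c0 cm.
apply: (ratio_lower_bound (m := expect lam) (J := expect (fun x => lam x * ln (lam x)))).
- by rewrite ltr0n.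
- exact: expect_lam_gt0.
- by rewrite invr_lt0 ln_beta_lt0.
- exact: hcoef_ge.
- by rewrite ln_le0 // (le_trans cm expect_lam_le1).
- apply: le_trans jensen_xlnx; apply: ler_wpM2l; first exact/ltW/expect_lam_gt0.
  by rewrite ler_ln ?posrE ?expect_lam_gt0.
- exact: fpass_ge.
- exact: ppass_sub_fpass_le.
- exact: fpass_ge0.
- exact: fpass_le_ppass.
Qed.

End ClassicalBound.

Lemma hadjE (R : realType) m n (A : 'M[R[i]]_(m, n)) i j : hadj A i j = (A j i)^*.
Proof. by rewrite !mxE. Qed.

Section ProductBasis.
Variables (R : realType) (D N : nat) (P : 'M[R[i]]_D).
Hypothesis P_unitary : P *m hadj P = 1%:M.
Hypothesis P_unitaryV : hadj P *m P = 1%:M.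
Local Notation I := (idx N D).

Lemma unitary_rows a b : \sum_k P a k * (P b k)^* = (a == b)%:R.
Proof.
have := congr1 (fun A : 'M_D => A a b) P_unitary; rewrite !mxE => <-.
by apply: eq_bigr => k _; rewrite hadjE.
Qed.

Lemma unitary_cols i j : \sum_a (P a i)^* * P a j = (i == j)%:R.
Proof.
have := congr1 (fun A : 'M_D => A i j) P_unitaryV; rewrite !mxE => <-.
by apply: eq_bigr => a _; rewrite hadjE.
Qed.

Definition tens_row (x i : I) := \prod_k P (x k) (i k).

(* <e_x| rho |e_x>, where the product eigenvector e_x has coordinates (tens_row x i)^*. *)
Definition meas_prob (rho : mop R N D) (x : I) :=
  \sum_i \sum_j tens_row x i * rho i j * (tens_row x j)^*.

Lemma trace_tens_op_diag (A : 'I_N.+1 -> 'M_D) (w : 'I_N.+1 -> 'I_D -> R[i])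
    (rho : mop R N D) :
    (forall k i j, A k i j = \sum_a w k a * ((P a i)^* * P a j)) ->
  trace_mul (tens_op A) rho = \sum_(x : I) (\prod_k w k (x k)) * meas_prob rho x.
Proof.
move=> Aw; have tensE i j : tens_op A i j =
    \sum_(x : I) (\prod_k w k (x k)) * ((tens_row x i)^* * tens_row x j).
  rewrite /tens_op (eq_bigr _ (fun k _ => Aw k (i k) (j k))) bigA_distr_bigA /=.
  by apply: eq_bigr => x _; rewrite /tens_row rmorph_prod -!big_split.
rewrite /trace_mul; under eq_bigr do under eq_bigr do rewrite tensE mulr_suml.
under eq_bigr do rewrite exchange_big /=.
rewrite exchange_big /=; apply: eq_bigr => x _.
rewrite /meas_prob mulr_sumr exchange_big /=; apply: eq_bigr => j _.
by rewrite mulr_sumr; apply: eq_bigr => i _; ring.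
Qed.

Lemma prod_eq_ffun (x y : I) : \prod_k ((x k == y k)%:R : R[i]) = (x == y)%:R.
Proof.
have [->|xy] := eqVneq x y; first by rewrite big1 // => k _; rewrite eqxx.
have [k xyk] : exists k, x k != y k.
  apply/existsP; apply: contraNT xy; rewrite negb_exists => /forallP xyE.
  by apply/eqP/ffunP => k; exact/eqP/negPn/xyE.
by rewrite (bigD1 k) //= (negbTE xyk) mul0r.
Qed.

Lemma tens_row_orthonormal (x y : I) :
  \sum_i tens_row x i * (tens_row y i)^* = (x == y)%:R.
Proof.
rewrite -prod_eq_ffun -(eq_bigr _ (fun k _ => unitary_rows (x k) (y k))).
rewrite bigA_distr_bigA /=.
by apply: eq_bigr => i _; rewrite /tens_row rmorph_prod -big_split.
Qed.

Lemma tens_op1 (i j : I) : tens_op (fun=> (1%:M : 'M[R[i]]_D)) i j = (i == j)%:R.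
Proof. by rewrite /tens_op; under eq_bigr do rewrite mxE; exact: prod_eq_ffun. Qed.

Lemma trace_tens_op1 (rho : mop R N D) :
  trace_mul (tens_op (fun=> (1%:M : 'M_D))) rho = \sum_i rho i i.
Proof.
rewrite /trace_mul; apply: eq_bigr => i _; under eq_bigr do rewrite tens_op1.
rewrite (bigD1 i) //= eqxx mul1r big1 ?addr0 // => j ji.
by rewrite eq_sym (negbTE ji) mul0r.
Qed.

Lemma sum_meas_prob (rho : mop R N D) : \sum_x meas_prob rho x = \sum_i rho i i.
Proof.
rewrite -trace_tens_op1 (@trace_tens_op_diag _ (fun _ _ => 1)).
  by apply: eq_bigr => x _; rewrite prodr_const expr1n mul1r.
by move=> k i j; rewrite mxE -unitary_cols; apply: eq_bigr => a _; rewrite mul1r.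
Qed.

Lemma meas_prob_ge0 (rho : mop R N D) x : density_op rho -> 0 <= meas_prob rho x.
Proof.
case=> _ rho_psd _; have := rho_psd (fun i => (tens_row x i)^*).
by under eq_bigr do under eq_bigr do rewrite conjCK.
Qed.

Lemma tens_row_relabel s (x i : I) : tens_row (relabel s x) (relabel s i) = tens_row x i.
Proof.
rewrite /tens_row [RHS](reindex_inj (@perm_inj _ s)); apply: eq_bigr => k _.
by rewrite !ffunE.
Qed.

Lemma meas_prob_relabel (rho : mop R N D) s x :
  perm_invariant rho -> meas_prob rho (relabel s x) = meas_prob rho x.
Proof.
move=> rho_inv; rewrite /meas_prob (reindex_inj (@relabel_inj _ _ s)).
apply: eq_bigr => i _; rewrite (reindex_inj (@relabel_inj _ _ s)); apply: eq_bigr => j _.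
by rewrite !tens_row_relabel [rho _ _]rho_inv.
Qed.

Definition basis_state (x0 : I) : mop R N D :=
  fun i j => (tens_row x0 i)^* * tens_row x0 j.

Lemma meas_prob_basis_state x0 x : meas_prob (basis_state x0) x = (x == x0)%:R.
Proof.
transitivity ((\sum_i tens_row x i * (tens_row x0 i)^*) *
              (\sum_j tens_row x0 j * (tens_row x j)^*)).
  rewrite /meas_prob mulr_suml; apply: eq_bigr => i _.
  by rewrite mulr_sumr; apply: eq_bigr => j _; rewrite /basis_state; ring.
by rewrite !tens_row_orthonormal eq_sym; case: (_ == _); rewrite ?mulr1 ?mulr0.
Qed.

Lemma basis_state_density x0 : density_op (basis_state x0).
Proof.
split.
- by move=> i j; rewrite /basis_state rmorphM /= conjCK mulrC.
- move=> v; set S := \sum_j tens_row x0 j * v j.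
  have -> : \sum_i \sum_j (v i)^* * basis_state x0 i j * v j = S * S^*.
    rewrite mulrC /S rmorph_sum mulr_suml; apply: eq_bigr => i _.
    by rewrite mulr_sumr; apply: eq_bigr => j _; rewrite rmorphM /basis_state; ring.
  exact: mul_conjC_ge0.
- transitivity (\sum_i tens_row x0 i * (tens_row x0 i)^*).
    by apply: eq_bigr => i _; rewrite /basis_state mulrC.
  by rewrite tens_row_orthonormal eqxx.
Qed.

Lemma const_basis_state_perm_invariant a : perm_invariant (basis_state [ffun=> a]).
Proof.
have relabel_cst s : relabel s [ffun=> a] = [ffun=> a] :> I.
  by apply/ffunP => k; rewrite !ffunE.
move=> s i j; rewrite /basis_state -[in RHS](tens_row_relabel s).
by rewrite -[in X in _ = _ * X](tens_row_relabel s) relabel_cst.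
Qed.

End ProductBasis.

Section Spectral.
Variables (R : realType) (D N : nat).
Variables (Om : 'M[R[i]]_D) (psi : 'cV[R[i]]_D) (beta tau : R).
Hypothesis psi_unit : unit_vector psi.
Hypothesis Om_verif : verification_op psi Om.
Hypothesis Om_le_beta : forall l, eigenvalue Om l -> l = 1 \/ l <= beta%:C%C.
Hypothesis Om_ge_tau : forall l, eigenvalue Om l -> tau%:C%C <= l.

Local Notation P := (spectralmx Om).
Local Notation dd := (spectral_diag Om).
Local Notation z := (P *m psi).

Lemma spectral_unitary : P *m hadj P = 1%:M.
Proof. exact/unitarymxP/spectral_unitarymx. Qed.

Lemma spectral_unitaryV : hadj P *m P = 1%:M.
Proof. by have := mulVmx (spectral_unit Om); rewrite invmx_unitary ?spectral_unitarymx. Qed.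

Lemma Om_spectral : Om = hadj P *m diag_mx dd *m P.
Proof.
have Om_normal : Om \is normalmx.
  apply/normalmxP; case: Om_verif => Om_herm _ _ _ _.
  by change (Om *m hadj Om = hadj Om *m Om); rewrite Om_herm.
by have := orthomx_spectralP Om_normal; rewrite invmx_unitary ?spectral_unitarymx.
Qed.

Lemma Om_entry i j : Om i j = \sum_a dd 0 a * ((P a i)^* * P a j).
Proof.
rewrite {1}Om_spectral mxE; apply: eq_bigr => a _.
by rewrite mul_mx_diag mxE hadjE; ring.
Qed.

Lemma spectral_mulmx : P *m Om = diag_mx dd *m P.
Proof. by rewrite [X in P *m X]Om_spectral !mulmxA spectral_unitary mul1mx. Qed.

Lemma eigenvalue_spectral_diag a : eigenvalue Om (dd 0 a).
Proof.
apply/eigenvalueP; exists (row a P).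
  by rewrite -row_mul spectral_mulmx mul_diag_mx; apply/rowP => k; rewrite !mxE.
apply/eqP => /rowP Pa0; have := unitary_rows spectral_unitary a a.
rewrite eqxx big1 => [/esym/eqP|k _]; first by rewrite oner_eq0.
by have := Pa0 k; rewrite !mxE => ->; rewrite mul0r.
Qed.

Definition ev a : R := complex.Re (dd 0 a).

Lemma spectral_diag_real a : dd 0 a = (ev a)%:C%C.
Proof.
have := Om_ge_tau (eigenvalue_spectral_diag a); rewrite lecE => /andP[/eqP Im0 _].
by rewrite /ev; case: (dd 0 a) Im0 => x y /= ->.
Qed.

Lemma tau_le_ev a : tau <= ev a.
Proof. by have := Om_ge_tau (eigenvalue_spectral_diag a); rewrite spectral_diag_real lecR. Qed.

Lemma spectral_diag_z a : dd 0 a * z a 0 = z a 0.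
Proof.
have : diag_mx dd *m z = z.
  by rewrite mulmxA -spectral_mulmx -mulmxA; case: Om_verif => _ _ _ -> _.
by rewrite mul_diag_mx => /matrixP/(_ a 0); rewrite mxE.
Qed.

(* Distinct rows of the unitary P are independent, while the eigenvalue 1 is simple. *)
Lemma spectral_diag1_unique a b : dd 0 a = 1 -> dd 0 b = 1 -> a = b.
Proof.
move=> da db; apply/eqP/negP => /negP ab.
pose f (i : 'I_2) := if i == 0 then a else b.
have f_inj i j : (f i == f j) = (i == j).
  case: i j => [[|[|i]] ?] [[|[|j]] ?] //=; rewrite /f /= ?eqxx //.
    by rewrite (negbTE ab).
  by rewrite eq_sym (negbTE ab).
have sub_eig : (rowsub f P <= eigenspace Om 1)%MS.
  apply/eigenspaceP; rewrite mul_rowsub_mx spectral_mulmx mul_diag_mx scale1r.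
  by apply/matrixP => i k; rewrite !mxE /f; case: ifP => _; rewrite ?da ?db mul1r.
have unit_sub : rowsub f P \is unitarymx.
  apply/unitarymxP/matrixP => i j; rewrite !mxE -f_inj -(unitary_rows spectral_unitary).
  by apply: eq_bigr => k _; rewrite !mxE.
have := mxrankS sub_eig; rewrite (mxrank_unitary unit_sub).
by case: Om_verif => _ _ _ _ ->.
Qed.

Lemma exists_a0 : exists a0, z a0 0 != 0.
Proof.
have /matrix0Pn [a [j za]] : z != 0.
  apply/eqP => z0; move: psi_unit; rewrite /unit_vector.
  have -> : psi = hadj P *m z by rewrite mulmxA spectral_unitaryV mul1mx.
  by rewrite z0 !mulmx0 mxE => /eqP; rewrite eq_sym oner_eq0.
by exists a; rewrite (ord1 j) in za.
Qed.

Section Target.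
Variable a0 : 'I_D.
Hypothesis z_a0 : z a0 0 != 0.

Lemma spectral_diag_a0 : dd 0 a0 = 1.
Proof.
have := spectral_diag_z a0; move/eqP; rewrite -subr_eq0 -{2}[z a0 0]mul1r -mulrBl.
by rewrite mulf_eq0 (negbTE z_a0) orbF subr_eq0 => /eqP.
Qed.

Lemma ev_a0 : ev a0 = 1.
Proof. by rewrite /ev spectral_diag_a0. Qed.

Lemma z_other a : a != a0 -> z a 0 = 0.
Proof.
move=> aa0; apply/eqP; apply: contraNT aa0 => za.
apply/eqP/spectral_diag1_unique; last exact: spectral_diag_a0.
have := spectral_diag_z a; move/eqP; rewrite -subr_eq0 -{2}[z a 0]mul1r -mulrBl.
by rewrite mulf_eq0 (negbTE za) orbF subr_eq0 => /eqP.
Qed.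

Lemma ev_other a : a != a0 -> tau <= ev a <= beta.
Proof.
move=> aa0; rewrite tau_le_ev /=.
case: (Om_le_beta (eigenvalue_spectral_diag a)) => [da|].
  by move: aa0; rewrite (spectral_diag1_unique da spectral_diag_a0) eqxx.
by rewrite spectral_diag_real lecR.
Qed.

Lemma psi_entry i : psi i 0 = (P a0 i)^* * z a0 0.
Proof.
have psiE : psi = hadj P *m z by rewrite mulmxA spectral_unitaryV mul1mx.
rewrite [in LHS]psiE mxE (bigD1 a0) //= big1 ?addr0 ?hadjE // => a aa0.
by rewrite z_other // mulr0.
Qed.

Lemma z_a0_norm : (z a0 0)^* * z a0 0 = 1.
Proof.
have := psi_unit; rewrite /unit_vector mxE => <-.
transitivity ((z a0 0)^* * z a0 0 * \sum_k P a0 k * (P a0 k)^*).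
  by rewrite (unitary_rows spectral_unitary) eqxx mulr1.
rewrite mulr_sumr; apply: eq_bigr => k _.
by rewrite hadjE psi_entry rmorphM /= conjCK; ring.
Qed.

Lemma psi_proj i j :
  (psi *m hadj psi) i j = \sum_a ((a == a0)%:R)%:C%C * ((P a i)^* * P a j).
Proof.
rewrite mxE big_ord1 hadjE !psi_entry (bigD1 a0) //= big1 ?addr0 => [|a /negbTE->].
  rewrite eqxx mul1r rmorphM /= conjCK.
  by rewrite -[RHS]mulr1 -z_a0_norm; ring.
by rewrite mul0r.
Qed.

Definition meas (rho : mop R N D) (x : idx N D) : R := complex.Re (meas_prob P rho x).

Lemma meas_prob_real rho x : density_op rho -> meas_prob P rho x = (meas rho x)%:C%C.
Proof.
move=> rho_dens; have := ger0_Im (meas_prob_ge0 P x rho_dens).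
by rewrite /meas; case: (meas_prob P rho x) => u v /= ->.
Qed.

Lemma meas_distribution rho : density_op rho -> perm_invariant rho ->
  [/\ forall x, 0 <= meas rho x, \sum_x meas rho x = 1
    & forall s x, meas rho (relabel s x) = meas rho x].
Proof.
move=> rho_dens rho_inv; split.
- by move=> x; rewrite -lecR -meas_prob_real // meas_prob_ge0.
- apply/(@complexI R); rewrite rmorph_sum /=.
  under eq_bigr do rewrite -meas_prob_real //.
  by rewrite (sum_meas_prob spectral_unitaryV); case: rho_dens.
- by move=> s x; rewrite /meas meas_prob_relabel.
Qed.

Lemma Re_trace_pass_weight (g : 'I_D -> R) (B : 'M_D) rho : density_op rho ->
    (forall i j, B i j = \sum_a (g a)%:C%C * ((P a i)^* * P a j)) ->
  complex.Re (trace_mul (tens_op (fun k : 'I_N.+1 => if (k < N)%N then Om else B)) rho) =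
  expect (meas rho) (pass_weight ev g).
Proof.
move=> rho_dens BE.
pose w (k : 'I_N.+1) a := if (k < N)%N then dd 0 a else (g a)%:C%C.
rewrite (@trace_tens_op_diag _ _ _ P _ w); last first.
  by move=> k i j; rewrite /w; case: ifP => _; [exact: Om_entry | exact: BE].
apply: (congr1 (@complex.Re R) (_ : _ = (expect (meas rho) (pass_weight ev g))%:C%C)).
rewrite /expect rmorph_sum; apply: eq_bigr => x _.
rewrite meas_prob_real // rmorphM /= mulrC /pass_weight rmorph_prod /=.
by congr (_ * _); apply: eq_bigr => k _; rewrite /w; case: ifP => _; rewrite ?spectral_diag_real.
Qed.

Lemma p_of_pass rho : density_op rho -> p_of Om rho = ppass (meas rho) ev.
Proof.
move=> rho_dens; apply: Re_trace_pass_weight => // i j.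
rewrite mxE -(unitary_cols spectral_unitaryV); apply: eq_bigr => a _.
by rewrite mul1r.
Qed.

Lemma f_of_pass rho : density_op rho -> f_of Om psi rho = fpass (meas rho) ev a0.
Proof.
move=> rho_dens; apply: Re_trace_pass_weight => // i j.
by rewrite psi_proj; apply: eq_bigr => a _; case: (a == a0).
Qed.

(* The row P a0 is psi^* up to a phase, so this is (|psi><psi|)^(N+1). *)
Definition psi_tens_state : mop R N D := basis_state P [ffun=> a0].

Lemma psi_tens_state_passes :
  [/\ density_op psi_tens_state, perm_invariant psi_tens_state,
      p_of Om psi_tens_state = 1 & f_of Om psi psi_tens_state = 1].
Proof.
set r0 := psi_tens_state; set x0 : idx N D := [ffun=> a0].
have meas_r0 x : meas r0 x = (x == x0)%:R.
  by rewrite /meas meas_prob_basis_state ?spectral_unitary //; case: (x == x0).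
have expect_r0 A : expect (meas r0) A = A x0.
  rewrite /expect (bigD1 x0) //= meas_r0 eqxx mul1r big1 ?addr0 // => x /negbTE x_x0.
  by rewrite meas_r0 x_x0 mul0r.
have pass_x0 g : g a0 = 1 -> pass_weight ev g x0 = 1.
  move=> g1; rewrite /pass_weight big1 // => k _.
  by rewrite ffunE; case: ifP; rewrite ?ev_a0.
have r0_dens : density_op r0 by apply: basis_state_density; exact: spectral_unitary.
split => //; first exact: const_basis_state_perm_invariant.
  by rewrite p_of_pass // /ppass expect_r0 pass_x0.
by rewrite f_of_pass // /fpass expect_r0 pass_x0 ?eqxx.
Qed.

Hypothesis tau_gt0 : 0 < tau.
Hypothesis tau_le_beta : tau <= beta.
Hypothesis beta_lt1 : beta < 1.

Lemma tau_p_of_le rho : density_op rho -> perm_invariant rho ->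
  tau * p_of Om rho <= expect (meas rho) (lam ev).
Proof.
move=> rho_dens rho_inv; have [q0 q1 q_rel] := meas_distribution rho_dens rho_inv.
rewrite p_of_pass //.
exact: tau_ppass_le q0 q_rel ev_a0 ev_other tau_gt0 tau_le_beta beta_lt1.
Qed.

Lemma f_of_le rho : density_op rho -> perm_invariant rho ->
  f_of Om psi rho <= expect (meas rho) (lam ev).
Proof.
move=> rho_dens rho_inv; have [q0 q1 q_rel] := meas_distribution rho_dens rho_inv.
by rewrite f_of_pass //; exact: fpass_le q0 q_rel ev_a0 ev_other tau_gt0.
Qed.

Lemma pass_ratio_ge rho c : density_op rho -> perm_invariant rho ->
    0 < c -> c <= expect (meas rho) (lam ev) ->
  (N%:R + 1 - (ln beta)^-1 * ln c) /
  (N%:R + 1 - (ln beta)^-1 * ln c - hcoef tau beta * ln c) <= f_of Om psi rho / p_of Om rho.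
Proof.
move=> rho_dens rho_inv c0 c_le; have [q0 q1 q_rel] := meas_distribution rho_dens rho_inv.
rewrite p_of_pass // f_of_pass // natr1.
exact (classical_bound q0 q1 q_rel ev_a0 ev_other tau_gt0 tau_le_beta beta_lt1 c0 c_le).
Qed.

End Target.
End Spectral.

Local Open Scope complex_scope.

Theorem lemma9 (R : realType) (D N : nat) (delta f : R)
  (Om : 'M[R[i]]_D) (psi : 'cV[R[i]]_D) (beta tau : R) :
  (2 <= D)%N -> (1 <= N)%N ->
  0 < delta -> delta <= 1 -> 0 < f -> f <= 1 ->
  unit_vector psi -> verification_op psi Om -> posdef Om ->
  (* beta is the second largest eigenvalue (eigenvalue 1 is the largest, simple) *)
  eigenvalue Om beta%:C -> beta%:C != 1 ->
  (forall l : R[i], eigenvalue Om l -> l = 1 \/ l <= beta%:C) ->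
  (* tau is the smallest eigenvalue *)
  eigenvalue Om tau%:C ->
  (forall l : R[i], eigenvalue Om l -> tau%:C <= l) ->
  0 < tau -> tau <= beta -> beta < 1 ->
  let h := (Order.min (beta * ln beta^-1) (tau * ln tau^-1))^-1 in
  Fdelta N delta Om psi >=
    (N%:R + 1 - (ln beta)^-1 * ln (tau * delta)) /
    (N%:R + 1 - (ln beta)^-1 * ln (tau * delta) - h * ln (tau * delta))
  /\
  Ffid N f Om psi >=
    (N%:R + 1 - (ln beta)^-1 * ln f) /
    (N%:R + 1 - (ln beta)^-1 * ln f - h * ln f).
Proof.
move=> _ _ delta0 delta1 f0 f1 psi_unit Om_verif _ _ _ Om_le_beta _ Om_ge_tau.
move=> tau0 tau_beta beta1 h.
have [a0 z_a0] := exists_a0 Om psi_unit.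
have [r0_dens r0_inv p_r0 f_r0] := psi_tens_state_passes N psi_unit Om_verif Om_ge_tau z_a0.
have ratio_ge := pass_ratio_ge psi_unit Om_verif Om_le_beta Om_ge_tau z_a0 tau0 tau_beta beta1.
have tau_p_le := tau_p_of_le Om_verif Om_le_beta Om_ge_tau z_a0 tau0 tau_beta beta1.
have f_le := f_of_le psi_unit Om_verif Om_le_beta Om_ge_tau z_a0 tau0.
split; apply: lb_le_inf; try by exists 1, (psi_tens_state Om a0); split; rewrite ?p_r0 ?f_r0 ?divr1.
- move=> _ [rho [rho_dens rho_inv delta_p ->]]; apply: ratio_ge => //; first exact: mulr_gt0.
  by apply: le_trans _ (tau_p_le _ _ rho_dens rho_inv); rewrite ler_pM2l.
- move=> _ [rho [rho_dens rho_inv f_rho ->]]; apply: ratio_ge => //.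
  exact: le_trans f_rho (f_le _ _ rho_dens rho_inv).
Qed.
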